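(* Let $n\ge1$. For every $\mathbf t\in\Delta_{n-1}$ and every vertex $x\in U_n\cup V_n$, the matrix $\rho_{\mathbf t}(p_x)\in M_{U_n}$ is in $\mathbf t$-block diagonal form.
   Context: For $n\ge1$, identify integers $0\le i<2^n$ with their $n$-digit binary representations $i=\sum_k i_k2^k$; $\mathrm{par}_k(i)=\sum_{r=0}^k i_r\bmod2$, and $i\#k$ is $i$ with its $k$-th digit flipped. The hypercube $Q_n$ has vertex classes $U_n=\{i<2^n\mid\mathrm{par}_{n-1}(i)=0\}$, $V_n=\{j<2^n\mid\mathrm{par}_{n-1}(j)=1\}$, with $i\in U_n$, $j\in V_n$ adjacent iff $j=i\#k$ for some $k<n$. $C^\ast(Q_n)$ is the universal unital C*-algebra generated by projections $p_x$ with $\sum_{u\in U_n}p_u=1=\sum_{v\in V_n}p_v$ and $p_up_v=0$ for non-adjacent $u,v$. $\Delta_{n-1}=\{[t_0,\dots,t_{n-1}]\mid t_k\ge0,\sum t_k=1\}$. For $\mathbf t\in\Delta_{n-1}$: $c_{\mathbf t}(ij)=(-1)^{\mathrm{par}_k(i)}\sqrt{t_k}$ for $i\in U_n$, $j=i\#k$ (and $0$ for non-adjacent $i,j$); $\rho_{\mathbf t}:C^\ast(Q_n)\to M_{U_n}$ is the representation with $\rho_{\mathbf t}(p_i)=E_{ii}$ ($i\in U_n$) and $\rho_{\mathbf t}(p_j)=[c_{\mathbf t}(i_1j)\overline{c_{\mathbf t}(i_2j)}]_{i_1,i_2\in U_n}$ ($j\in V_n$). $Q_n(\mathbf t)$ is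 the graph obtained from $Q_n$ by deleting all edges $ij$ with $j=i\#k$ and $t_k=0$; a matrix $A\in M_{U_n}$ is in $\mathbf t$-block diagonal form if $A_{i_1i_2}=0$ whenever $i_1,i_2$ lie in distinct connected components of $Q_n(\mathbf t)$. *)

From mathcomp Require Import all_boot all_order all_algebra.
Set Implicit Arguments. Unset Strict Implicit. Unset Printing Implicit Defensive.
Import Order.TTheory GRing.Theory Num.Theory.
Local Open Scope ring_scope.

Definition digit (k i : nat) : bool := odd (i %/ 2 ^ k)%N.

Definition par (k i : nat) : bool := odd (\sum_(r < k.+1) digit r i)%N.

Definition flip (i k : nat) : nat := if digit k i then (i - 2 ^ k)%N else (i + 2 ^ k)%N.

(* vertices of Q_n are the integers 0 <= i < 2^n *)
Definition vertex (n : nat) := 'I_(2 ^ n).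

Definition inU (n : nat) (i : vertex n) : bool := ~~ par n.-1 i.
Definition inV (n : nat) (j : vertex n) : bool := par n.-1 j.

Definition Uidx (n : nat) := {i : vertex n | inU i}.

Definition in_simplex (R : realFieldType) (n : nat) (t : 'I_n -> R) : Prop :=
  (forall k, 0 <= t k) /\ \sum_(k < n) t k = 1.

Definition ct (R : rcfType) (n : nat) (t : 'I_n -> R) (i j : vertex n) : R :=
  match [pick k : 'I_n | val j == flip (val i) k] with
  | Some k => (-1) ^+ par k (val i) * Num.sqrt (t k)
  | None => 0
  end.

(* rho_t(p_x) as a matrix indexed by U_n x U_n.  Since c_t is real-valued,
   complex conjugation is the identity on it. *)
Definition rho (R : rcfType) (n : nat) (t : 'I_n -> R) (x : vertex n)
    (i1 i2 : Uidx n) : R :=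
  if inU x then ((val i1 == x) && (val i2 == x))%:R
  else ct t (val i1) x * ct t (val i2) x.

Definition Qt_edge (R : realFieldType) (n : nat) (t : 'I_n -> R) : rel (vertex n) :=
  fun i j => [exists k : 'I_n, (t k != 0) && (val j == flip (val i) k)].

Definition block_diag (R : realFieldType) (n : nat) (t : 'I_n -> R)
    (A : Uidx n -> Uidx n -> R) : Prop :=
  forall i1 i2 : Uidx n, ~~ connect (Qt_edge t) (val i1) (val i2) -> A i1 i2 = 0.

From mathcomp Require Import all_boot all_order all_algebra.
Set Implicit Arguments. Unset Strict Implicit. Unset Printing Implicit Defensive.
Import Order.TTheory GRing.Theory Num.Theory.
Local Open Scope ring_scope.

(* If [x] is in [U_n], then [rho_t(p_x)] has a single nonzero entry, on the
   diagonal.  If [x] is in [V_n], its [(i1, i2)] entry is [c_t(i1 x) c_t(i2 x)],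
   and [c_t(i x) <> 0] forces [x = i # k] with [t_k <> 0], i.e. an edge of
   [Q_n(t)]; so a nonzero entry joins [i1] to [i2] through [x]. *)

Lemma digitDexp (i k : nat) : digit k (i + 2 ^ k) = ~~ digit k i.
Proof.
by rewrite /digit addnC -{1}[(2 ^ k)%N]mul1n divnMDl ?expn_gt0.
Qed.

Lemma digit_exp_leq (i k : nat) : digit k i -> (2 ^ k <= i)%N.
Proof.
by apply: contraLR; rewrite -ltnNge /digit => /divn_small ->.
Qed.

Lemma digit_flip (i k : nat) : digit k (flip i k) = ~~ digit k i.
Proof.
rewrite /flip; case: ifP => [dki | ndki]; last by rewrite digitDexp ndki.
have := digitDexp (i - 2 ^ k) k.
by rewrite subnK ?digit_exp_leq // dki; case: digit.
Qed.

Lemma flipK (k : nat) : involutive (flip^~ k).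
Proof.
move=> i; rewrite {1}/flip digit_flip /flip.
by case dki: (digit k i) => /=; [rewrite subnK ?digit_exp_leq | rewrite addnK].
Qed.

Lemma Qt_edge_sym (R : realFieldType) (n : nat) (t : 'I_n -> R) :
  symmetric (Qt_edge t).
Proof.
suff edge_sym i j : Qt_edge t i j -> Qt_edge t j i.
  by move=> i j; apply/idP/idP => /edge_sym.
case/existsP=> k /andP[tk /eqP jk]; apply/existsP; exists k.
by rewrite tk jk flipK eqxx.
Qed.

Section RhoEntries.

Variables (R : rcfType) (n : nat) (t : 'I_n -> R).

Lemma ct_neq0_edge (i j : vertex n) : ct t i j != 0 -> Qt_edge t i j.
Proof.
rewrite /ct; case: pickP => [k jk | _]; last by rewrite eqxx.
rewrite mulf_eq0 negb_or => /andP[_]; rewrite sqrtr_eq0 -ltNge => tk_gt0.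
by apply/existsP; exists k; rewrite jk gt_eqF.
Qed.

Lemma rho_inU_neq0_eq (x : vertex n) (i1 i2 : Uidx n) :
  inU x -> rho t x i1 i2 != 0 -> val i1 = val i2.
Proof.
rewrite /rho => ->; case: andP => [[/eqP -> /eqP ->] // | _].
by rewrite eqxx.
Qed.

Lemma rho_inV_neq0_connect (x : vertex n) (i1 i2 : Uidx n) :
  ~~ inU x -> rho t x i1 i2 != 0 -> connect (Qt_edge t) (val i1) (val i2).
Proof.
rewrite /rho => /negbTE ->; rewrite mulf_eq0 negb_or => /andP[c1 c2].
apply: (connect_trans (y := x)); apply: connect1; first exact: ct_neq0_edge.
by rewrite Qt_edge_sym; apply: ct_neq0_edge.
Qed.

End RhoEntries.

Theorem lemma6p3 (R : rcfType) (n : nat) (hn : (1 <= n)%N) (t : 'I_n -> R)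
  (ht : in_simplex t) (x : vertex n) :
  block_diag t (rho t x).
Proof.
move=> i1 i2 not_connected; apply/eqP; apply: contraNT not_connected => nz.
have [xU | xV] := boolP (inU x).
  by rewrite (rho_inU_neq0_eq xU nz) connect0.
exact: rho_inV_neq0_connect xV nz.
Qed.
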